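(* Let $R,r>0$, $q_1=\frac{1}{2r}+\frac{1}{2R}$, and let $K^{-1/2}_0$, $\mathcal{K}^*_{\partial\Omega}$ and $\{\mathbb{E}(t)\}_{t\in[-1/2,1/2]}$ be as in the context (touching disks). Then $$\mathcal{K}^*_{\partial\Omega}=\int_{-1/2}^{1/2}t\,d\mathbb{E}(t),$$ that is, $\langle f,\mathcal{K}^*_{\partial\Omega}[g]\rangle_{-1/2}=\int_{-1/2}^{1/2}t\,d\langle f,\mathbb{E}(t)g\rangle_{-1/2}$ for all $f,g\in K^{-1/2}_0$.
   Context: Setting (touching disks). Identify $\mathbb{R}^2$ with $\mathbb{C}$; for $a\in\mathbb{R}\setminus\{0\}$ let $B_a$ be the open disk of radius $|a|$ centered at $(a,0)$. Fix $R,r>0$, let $\Omega=B_R\cup B_{-r}$ (two externally touching disks), and put $q_1=\frac{1}{2r}+\frac{1}{2R}>0$. For $k\neq0$ let $$\mathbb{S}(k)=\frac{1}{2|k|}\begin{bmatrix}1-e^{-|k|q_1}&0\\0&1+e^{-|k|q_1}\end{bmatrix},\qquad \mathbb{K}(k)=\frac12e^{-|k|q_1}\begin{bmatrix}1&0\\0&-1\end{bmatrix}.$$ $K^{-1/2}_0$ is the Hilbert space of pairs $\hat\varphi=(\hat\varphi_1,\hat\varphi_2)^T$ of measurable complex functions on $\mathbb{R}$ (mod a.e.) with $\int_{\mathbb{R}}\hat\varphi^T\mathbb{S}\overline{\hat\varphi}\,dk<\infty$, with inner product $\langle\psi,\varphi\rangle_{-1/2}=\int_{\mathbb{R}}\hat\psi^T\mathbb{S}\overline{\hat\varphi}\,dk$.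 (In the paper such a pair represents the boundary density $\varphi=U^{-1}P\hat\varphi$ on $\partial\Omega$, with $P=\frac1{\sqrt2}\begin{bmatrix}-1&1\\1&1\end{bmatrix}$ and $U$ the Fourier transform of the density pulled back by $z\mapsto 1/z$ to the lines $x=\frac1{2R}$ and $x=-\frac1{2r}$; one writes $PU\varphi=(\hat\varphi_1,\hat\varphi_2)^T$.) The Neumann–Poincaré operator $\mathcal{K}^*_{\partial\Omega}$ on $K^{-1/2}_0$ is the multiplication operator $\hat\varphi\mapsto\mathbb{K}\hat\varphi$. For $s\in\mathbb{R}\cup\{\infty\}$ let $\mathcal{P}^1(s)(\hat\varphi_1,\hat\varphi_2)=(\chi_{(-\infty,s]}\hat\varphi_1,0)$, $\mathcal{P}^2(s)(\hat\varphi_1,\hat\varphi_2)=(0,\chi_{(-\infty,s]}\hat\varphi_2)$ (with $\chi_{(-\infty,\infty]}\equiv1$), $\mathbb{I}=\mathcal{P}^1(\infty)+\mathcal{P}^2(\infty)$, and $$\mathbb{E}(t)=\begin{cases}\mathcal{P}^2\!\left(-\frac{\ln(-2t)}{q_1}\right)-\mathcal{P}^2\!\left(\frac{\ln(-2t)}{q_1}\right),& t\in[-1/2,0),\\[2pt]\mathcal{P}^1\!\left(\frac{\ln(2t)}{q_1}\right)-\mathcal{P}^1\!\left(-\frac{\ln(2t)}{q_1}\right)+\mathbb{I},& t\in(0,1/2],\end{cases}\qquad \mathbb{E}(0)=\lim_{t\to0^+}\mathbb{E}(t).$$ *)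

From HB Require Import structures.
From mathcomp Require Import all_boot all_order all_algebra.
From mathcomp Require Import all_classical all_reals all_analysis.
From mathcomp Require Import complex.
Set Implicit Arguments. Unset Strict Implicit. Unset Printing Implicit Defensive.
Import Order.TTheory GRing.Theory Num.Theory.
Local Open Scope ring_scope.
Local Open Scope complex_scope.

Section TouchingDisks.
Variable R : realType.

Definition q1 (r Rad : R) : R := 1 / (2 * r) + 1 / (2 * Rad).

(* A pair (phi_1, phi_2) of complex functions on the real line,
   stored as k |-> column vector (phi_1 k, phi_2 k)^T. *)
Definition dens := R -> 'cV[R[i]]_2.

(* The matrix symbol S(k) (only used for k <> 0; the value at k = 0 is
   irrelevant, a null set). *)
Definition Smx (q k : R) : 'M[R[i]]_2 :=
  \matrix_(i, j) (if i == j then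
      (if i == 0 then ((1 / (2 * `|k|)) * (1 - expR (- (`|k| * q))))%:C
       else ((1 / (2 * `|k|)) * (1 + expR (- (`|k| * q))))%:C)
    else 0).

Definition Kmx (q k : R) : 'M[R[i]]_2 :=
  \matrix_(i, j) (if i == j then
      (if i == 0 then ((1 / 2) * expR (- (`|k| * q)))%:C
       else (- ((1 / 2) * expR (- (`|k| * q))))%:C)
    else 0).

Definition form (q : R) (psi phi : dens) (k : R) : R[i] :=
  (((psi k)^T *m Smx q k *m map_mx (@conjc R) (phi k)) ord0 ord0).

Definition cint (f : R -> R[i]) : R[i] :=
  (Rintegral lebesgue_measure setT (fun k => complex.Re (f k)))
    +i* (Rintegral lebesgue_measure setT (fun k => complex.Im (f k))).

Definition inK0 (q : R) (phi : dens) : Prop :=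
  (forall i : 'I_2,
      measurable_fun setT (fun k => complex.Re (phi k i ord0)) /\
      measurable_fun setT (fun k => complex.Im (phi k i ord0))) /\
  (\int[lebesgue_measure]_k (complex.Re (form q phi phi k))%:E < +oo)%E.

Definition ip (q : R) (psi phi : dens) : R[i] := cint (form q psi phi).

Definition Kop (q : R) (phi : dens) : dens := fun k => Kmx q k *m phi k.

Definition dadd (a b : dens) : dens := fun k => a k + b k.
Definition dsub (a b : dens) : dens := fun k => a k - b k.

Definition chi (s : \bar R) (k : R) : R := if (k%:E <= s)%E then 1 else 0.

Definition P1 (s : \bar R) (phi : dens) : dens := fun k =>
  \col_i (if i == 0 then (chi s k)%:C * phi k i ord0 else 0).
Definition P2 (s : \bar R) (phi : dens) : dens := fun k =>
  \col_i (if i == 0 then 0 else (chi s k)%:C * phi k i ord0).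

Definition Iop (phi : dens) : dens := dadd (P1 +oo%E phi) (P2 +oo%E phi).

(* The spectral family E(t).  For t < 0 and t > 0 the formulas of the paper;
   E(0) := lim_{t -> 0+} E(t), which equals P^2(oo) (computed explicitly). *)
Definition Efam (q t : R) (phi : dens) : dens :=
  if t < 0 then
    dsub (P2 ((- ln (- (2 * t)) / q)%:E) phi) (P2 ((ln (- (2 * t)) / q)%:E) phi)
  else if 0 < t then
    dadd (dsub (P1 ((ln (2 * t) / q)%:E) phi) (P1 ((- ln (2 * t) / q)%:E) phi))
         (Iop phi)
  else P2 +oo%E phi.

Definition is_RS_integral (phi : R -> R) (alpha : R -> R[i]) (a b : R)
    (I : R[i]) : Prop :=
  forall eps : R, 0 < eps -> exists2 delta : R, 0 < delta &
    forall (n : nat) (x xi : nat -> R),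
      x 0%N = a -> x n = b ->
      (forall i : nat, (i < n)%N ->
          x i <= xi i <= x i.+1 /\ x i.+1 - x i < delta) ->
      Normc.normc (\sum_(i < n) ((phi (xi i))%:C * (alpha (x i.+1) - alpha (x i)))
             - I) < eps.

End TouchingDisks.

From HB Require Import structures.
From mathcomp Require Import all_boot all_order all_algebra.
From mathcomp Require Import all_classical all_reals all_analysis.
From mathcomp Require Import complex measurable_realfun.
From mathcomp Require Import ring lra.
(* Imported last, so that MathComp's [form] does not shadow the one of Defs. *)
From Pilot Require Import Defs.

(* In the Fourier picture K* and every E(t) are diagonal multipliers: on the
   component j at frequency k, K* multiplies by lambda_j(k) = +-exp(-|k| q)/2,
   which lies in [-1/2, 1/2], and E(t) by the unit step in t jumping at
   lambda_j(k). A Riemann-Stieltjes sum of t against a unit step at lambda is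
   within the mesh of lambda. These sums commute with the k-integral, since
   the steps are bounded and, by AM-GM, the densities f_j S_j conj(g_j) are
   dominated by the integrands of ||f||^2 and ||g||^2. Hence the real and the
   imaginary part of a Riemann-Stieltjes sum of <f, E(t) g> are within
   mesh * (||f||^2 + ||g||^2) / 2 of those of <f, K* g>. *)

Set Implicit Arguments.
Unset Strict Implicit.
Unset Printing Implicit Defensive.
Import Order.TTheory GRing.Theory Num.Theory.
Import numFieldNormedType.Exports.

Local Open Scope classical_set_scope.
Local Open Scope ring_scope.

Section RiemannStieltjesSums.
Variable R : realFieldType.
Implicit Types (x xi : nat -> R) (n : nat) (alpha e : R -> R).

Definition RSsum x xi n alpha : R :=
  \sum_(i < n) xi i * (alpha (x i.+1) - alpha (x i)).

Definition fine_tagged (d : R) n x xi : Prop :=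
  forall i, (i < n)%N -> x i <= xi i <= x i.+1 /\ x i.+1 - x i < d.

Lemma fine_tagged_homo d n x xi : fine_tagged d n x xi ->
  {in [pred i | (i <= n)%N] &, {homo x : i j / (i <= j)%N >-> i <= j}}.
Proof.
move=> hx i j; rewrite !inE => _ jn ij.
elim: j ij jn => [|j IH]; first by rewrite leqn0 => /eqP ->.
rewrite leq_eqVlt => /orP[/eqP -> //| ij] jn.
have [/andP[xi1 xi2] _] := hx j jn.
exact: le_trans (IH ij (ltnW jn)) (le_trans xi1 xi2).
Qed.

Lemma RSsum_sum (I : Type) (r : seq I) (alpha : I -> R -> R) x xi n :
  RSsum x xi n (fun t => \sum_(j <- r) alpha j t) = \sum_(j <- r) RSsum x xi n (alpha j).
Proof.
rewrite /RSsum exchange_big /=; apply: eq_bigr => i _.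
by rewrite -sumrB mulr_sumr.
Qed.

Lemma RSsumMr alpha (c : R) x xi n :
  RSsum x xi n (fun t => alpha t * c) = RSsum x xi n alpha * c.
Proof. by rewrite /RSsum mulr_suml; apply: eq_bigr => i _; rewrite -mulrBl mulrA. Qed.

Lemma RSsum_step (a b l d : R) e x xi n :
  fine_tagged d n x xi -> x 0%N = a -> x n = b -> e a = 0 -> e b = 1 ->
  (forall t, a <= t <= b -> e t = (l < t)%R%:R \/ e t = (l <= t)%R%:R) ->
  `|RSsum x xi n e - l| <= d.
Proof.
move=> hx x0 xn ea eb he.
have e_step u : a <= u <= b -> [/\ 0 <= e u <= 1, u < l -> e u = 0 & l < u -> e u = 1].
  case/he => ->; split; rewrite ?ler0n ?lern1 ?leq_b1 //.
  - by move=> ul; rewrite ltNge ltW.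
  - by move=> ->.
  - by move=> ul; rewrite leNgt ul.
  - by move=> lu; rewrite ltW.
have sum_incr : \sum_(i < n) (e (x i.+1) - e (x i)) = 1.
  rewrite -(big_mkord xpredT (fun i => e (x i.+1) - e (x i))) telescope_sumr //.
  by rewrite xn x0 eb ea subr0.
have -> : l = \sum_(i < n) l * (e (x i.+1) - e (x i)) by rewrite -mulr_sumr sum_incr mulr1.
rewrite /RSsum -sumrB -[d]mulr1 -sum_incr mulr_sumr.
apply: le_trans (ler_norm_sum _ _ _) (ler_sum _ _) => -[i ilt] _ /=.
have [/andP[xi1 xi2] xd] := hx i ilt.
have xab m : (m <= n)%N -> a <= x m <= b.
  by move=> mn; rewrite -x0 -xn !(fine_tagged_homo hx) ?inE.
have [/andP[_ e_le1] el eg] := e_step _ (xab _ (ltnW ilt)).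
have [/andP[e_ge0' _] el' eg'] := e_step _ (xab _ ilt).
rewrite -mulrBl.
have [xl|lx] := ltrP (x i.+1) l.
  by rewrite el ?el' 1?(le_lt_trans (le_trans xi1 xi2)) // subrr !mulr0 normr0.
have [lx'|xl'] := ltrP l (x i).
  by rewrite eg ?eg' 1?(lt_le_trans lx' (le_trans xi1 xi2)) // subrr !mulr0 normr0.
have incr_ge0 : 0 <= e (x i.+1) - e (x i).
  have [xil|lxi] := ltrP (x i) l; first by rewrite el // subr0.
  have [lxi'|xl2] := ltrP l (x i.+1); first by rewrite eg' // subr_ge0.
  have -> : x i.+1 = x i by apply/eqP; rewrite eq_le (le_trans xl2 lxi) (le_trans xi1 xi2).
  by rewrite subrr.
rewrite normrM (ger0_norm incr_ge0) ler_wpM2r // ler_norml; apply/andP; split; lra.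
Qed.

End RiemannStieltjesSums.

Section IntegralsOfRSsums.
Context d (T : measurableType d) (R : realType) (mu : {measure set T -> \bar R}).
Local Notation integrable h := (mu.-integrable setT (EFin \o h)).

Lemma integrable_sumr (I : Type) (r : seq I) (h : I -> T -> R) :
  (forall i, integrable (h i)) -> integrable (fun x => \sum_(i <- r) h i x).
Proof.
move=> hi; rewrite (_ : EFin \o _ = fun x => \sum_(i <- r) (EFin \o h i) x).
  by apply: integrable_sum => // i _; exact: hi.
by apply/funext => x /=; rewrite sumEFin.
Qed.

Lemma Rintegral_sum (I : Type) (r : seq I) (h : I -> T -> R) :
  (forall i, integrable (h i)) ->
  \int[mu]_x (\sum_(i <- r) h i x) = \sum_(i <- r) \int[mu]_x h i x.
Proof.
move=> hi; elim: r => [|i r IH].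
  by rewrite big_nil; under eq_Rintegral do rewrite big_nil; rewrite Rintegral_cst // mul0r.
rewrite big_cons -IH -RintegralD //; last exact: integrable_sumr.
by apply: eq_Rintegral => x _; rewrite big_cons.
Qed.

Lemma integrable_bounded_mulr (w h : T -> R) (M : R) :
  measurable_fun setT w -> (forall x, `|w x| <= M) -> integrable h ->
  integrable (fun x => w x * h x).
Proof.
move=> mw wM ih; have wbd : [bounded w x | x in setT].
  exists M; split; first exact: num_real.
  by move=> y My x _; apply: le_trans (wM x) (ltW My).
have := integrableMr measurableT mw wbd ih.
by apply: eq_integrable => // x _; rewrite /= EFinM.
Qed.

Lemma RSsum_Rintegral (G : R -> T -> R) x xi n :
  (forall t, integrable (G t)) ->
  RSsum x xi n (fun t => \int[mu]_k G t k) = \int[mu]_k RSsum x xi n (G^~ k).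
Proof.
move=> iG; have iterm (i : nat) : integrable (fun k => xi i * (G (x i.+1) k - G (x i) k)).
  exact: (integrableZl measurableT (xi i) (integrableB measurableT (iG _) (iG _))).
rewrite /RSsum Rintegral_sum //; apply: eq_bigr => i _.
by rewrite RintegralZl ?RintegralB //; exact: (integrableB measurableT (iG _) (iG _)).
Qed.

Lemma RSsum_Rintegral_le (G : R -> T -> R) (L B : T -> R) x xi n :
  (forall t, integrable (G t)) -> integrable L -> integrable B ->
  (forall k, `|RSsum x xi n (G^~ k) - L k| <= B k) ->
  `|RSsum x xi n (fun t => \int[mu]_k G t k) - \int[mu]_k L k| <= \int[mu]_k B k.
Proof.
move=> iG iL iB GLB; have iRS : integrable (fun k => RSsum x xi n (G^~ k)).
  apply: integrable_sumr => i.
  exact: (integrableZl measurableT (xi i) (integrableB measurableT (iG _) (iG _))).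
rewrite RSsum_Rintegral // -RintegralB //.
have iD := integrableB measurableT iRS iL.
apply: le_trans (le_normr_Rintegral measurableT iD) (le_Rintegral _ _ iB _) => //.
exact: integrable_norm.
Qed.

End IntegralsOfRSsums.

Section ComplexParts.
Variable R : rcfType.
Local Open Scope complex_scope.
Implicit Types (z w : R[i]) (p : {scalar Rcomplex R}).

Lemma real_complexM_scale (c : R) z : c%:C * z = c *: (z : Rcomplex R).
Proof. by case: z => a b; apply/eqP; rewrite eq_complex /= !mul0r subr0 addr0 !eqxx. Qed.

Lemma linear_real_complexM p (c : R) z : p (c%:C * z) = c * p z.
Proof. by rewrite real_complexM_scale linearZ. Qed.

Lemma linear_ReIm p z : p z = p 1 * complex.Re z + p 'i * complex.Im z.
Proof.
have zE : z = complex.Re z *: (1 : Rcomplex R) + complex.Im z *: ('i : Rcomplex R).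
  by case: z => a b; apply/eqP; rewrite eq_complex /= !mulr0 !mulr1 addr0 add0r !eqxx.
by rewrite {1}zE linearD !linearZ /= mulrC [X in _ + X]mulrC.
Qed.

Lemma conjc_realM (c : R) z : conjc (c%:C * z) = c%:C * conjc z.
Proof. by case: z => a b; apply/eqP; rewrite eq_complex /=; apply/andP; split; apply/eqP; ring. Qed.

Lemma normc_ge0 z : 0 <= Normc.normc z.
Proof. by case: z => a b; exact: sqrtr_ge0. Qed.

Lemma normc_conj z : Normc.normc (conjc z) = Normc.normc z.
Proof. by case: z => a b /=; rewrite sqrrN. Qed.

Lemma sqr_normc z : Normc.normc z ^+ 2 = complex.Re z ^+ 2 + complex.Im z ^+ 2.
Proof. by case: z => a b /=; rewrite sqr_sqrtr // addr_ge0 ?sqr_ge0. Qed.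

Lemma normr_Re_le_normc z : `|complex.Re z| <= Normc.normc z.
Proof.
by rewrite -sqrtr_sqr; case: z => a b /=; rewrite ler_sqrt ?lerDl ?sqr_ge0 // addr_ge0 ?sqr_ge0.
Qed.

Lemma normr_Im_le_normc z : `|complex.Im z| <= Normc.normc z.
Proof.
by rewrite -sqrtr_sqr; case: z => a b /=; rewrite ler_sqrt ?lerDr ?sqr_ge0 // addr_ge0 ?sqr_ge0.
Qed.

Lemma normc_le_Re_Im z : Normc.normc z <= `|complex.Re z| + `|complex.Im z|.
Proof.
case: z => a b /=; have ab_ge0 : 0 <= `|a| + `|b| by rewrite addr_ge0.
rewrite -[leRHS](ger0_norm ab_ge0) -[leRHS]sqrtr_sqr ler_sqrt ?sqr_ge0 //.
rewrite sqrrD !real_normK ?num_real //.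
have := mulr_ge0 (normr_ge0 a) (normr_ge0 b); lra.
Qed.

Lemma linear_RSsum p (alpha : R -> R[i]) (I : R[i]) (x xi : nat -> R) n :
  p (\sum_(i < n) (xi i)%:C * (alpha (x i.+1) - alpha (x i)) - I)
  = RSsum x xi n (fun t => p (alpha t)) - p I.
Proof.
rewrite linearB linear_sum; congr (_ - _); apply: eq_bigr => i _.
by rewrite linear_real_complexM linearB.
Qed.

End ComplexParts.

Lemma measurable_inv (R : realType) : measurable_fun [set: R] GRing.inv.
Proof.
have nz_open : open [set x : R | x != 0] by exact: open_neq.
have -> : [set: R] = [set 0] `|` [set x | x != 0].
  by apply/seteqP; split => x // _; case: (eqVneq x 0); [left | right].
apply/measurable_funU => //; first exact: open_measurable.
split; first exact: measurable_fun_set1.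
apply: open_continuous_measurable_fun => // x; rewrite inE.
exact: inv_continuous.
Qed.

Section ComplexMeasurable.
Context d (T : measurableType d) (R : realType).
Local Open Scope complex_scope.
Implicit Types F G : T -> R[i].

Definition cmeasurable F : Prop :=
  measurable_fun setT (fun x => complex.Re (F x)) /\
  measurable_fun setT (fun x => complex.Im (F x)).

Lemma cmeasurable_real (s : T -> R) : measurable_fun setT s -> cmeasurable (fun x => (s x)%:C).
Proof. by split. Qed.

Lemma cmeasurableD F G : cmeasurable F -> cmeasurable G -> cmeasurable (fun x => F x + G x).
Proof.
move=> [mFr mFi] [mGr mGi]; split.
- by under eq_fun do rewrite (linearD (@complex.Re R : Rcomplex R -> R)); exact: measurable_funD.
- by under eq_fun do rewrite (linearD (@complex.Im R : Rcomplex R -> R)); exact: measurable_funD.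
Qed.

Lemma cmeasurable_sum (I : Type) (r : seq I) (F : I -> T -> R[i]) :
  (forall i, cmeasurable (F i)) -> cmeasurable (fun x => \sum_(i <- r) F i x).
Proof.
move=> mF; elim: r => [|i r IH].
  by under eq_fun do rewrite big_nil; exact: cmeasurable_real.
by under eq_fun do rewrite big_cons; exact: cmeasurableD.
Qed.

Lemma cmeasurableM F G : cmeasurable F -> cmeasurable G -> cmeasurable (fun x => F x * G x).
Proof.
have ReM (z w : R[i]) :
    complex.Re (z * w) = complex.Re z * complex.Re w - complex.Im z * complex.Im w.
  by case: z w => [a b] [c e].
have ImM (z w : R[i]) :
    complex.Im (z * w) = complex.Re z * complex.Im w + complex.Im z * complex.Re w.
  by case: z w => [a b] [c e].
move=> [mFr mFi] [mGr mGi]; split.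
- by under eq_fun do rewrite ReM; apply: measurable_funB; exact: measurable_funM.
- by under eq_fun do rewrite ImM; apply: measurable_funD; exact: measurable_funM.
Qed.

Lemma cmeasurable_conj F : cmeasurable F -> cmeasurable (fun x => conjc (F x)).
Proof.
have ReJ (z : R[i]) : complex.Re (conjc z) = complex.Re z by case: z.
have ImJ (z : R[i]) : complex.Im (conjc z) = - complex.Im z by case: z.
move=> [mFr mFi]; split; under eq_fun do rewrite ?ReJ ?ImJ; first exact: mFr.
exact: measurable_funN.
Qed.

Lemma linear_measurable (p : {scalar Rcomplex R}) F :
  cmeasurable F -> measurable_fun setT (fun x => p (F x)).
Proof.
move=> [mFr mFi]; under eq_fun do rewrite linear_ReIm.
by apply: measurable_funD; exact: measurable_funM.
Qed.

End ComplexMeasurable.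

Section ComplexIntegral.
Variable R : realType.
Local Open Scope complex_scope.
Local Notation mu := (@lebesgue_measure R).
Local Notation integrable h := (mu.-integrable setT (EFin \o h)).

Lemma linear_cint (p : {scalar Rcomplex R}) (F : R -> R[i]) :
  integrable (fun k => complex.Re (F k)) -> integrable (fun k => complex.Im (F k)) ->
  p (cint F) = \int[mu]_k p (F k).
Proof.
move=> iRe iIm; rewrite [LHS]linear_ReIm; under eq_Rintegral do rewrite linear_ReIm.
rewrite RintegralD ?RintegralZl //.
- exact: eq_integrable (integrableZl measurableT (p 1) iRe).
- exact: eq_integrable (integrableZl measurableT (p 'i) iIm).
Qed.

End ComplexIntegral.

Section TouchingDisks.
Variable R : realType.
Local Open Scope complex_scope.
Local Notation mu := (@lebesgue_measure R).
Local Notation integrable h := (mu.-integrable setT (EFin \o h)).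
Variable q : R.
Hypothesis q_gt0 : 0 < q.
Implicit Types (f g phi : dens R) (j : 'I_2) (k t : R).

Definition Sdiag j k : R :=
  if j == 0 then 1 / (2 * `|k|) * (1 - expR (- (`|k| * q)))
  else 1 / (2 * `|k|) * (1 + expR (- (`|k| * q))).

Definition Kdiag j k : R :=
  if j == 0 then 1 / 2 * expR (- (`|k| * q)) else - (1 / 2 * expR (- (`|k| * q))).

Definition Ediag t j k : R :=
  if t < 0 then
    if j == 0 then 0 else chi ((- ln (- (2 * t)) / q)%:E) k - chi ((ln (- (2 * t)) / q)%:E) k
  else if 0 < t then
    if j == 0 then chi ((ln (2 * t) / q)%:E) k - chi ((- ln (2 * t) / q)%:E) k + 1 else 1
  else if j == 0 then 0 else 1.

Definition diag_mult (w : 'I_2 -> R -> R) g phi :=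
  forall k j, phi k j ord0 = (w j k)%:C * g k j ord0.

Lemma Kop_diag_mult g : diag_mult Kdiag g (Kop q g).
Proof.
move=> k j; rewrite /Kop /Kmx /Kdiag !mxE (bigD1 j) //= big1 ?addr0.
  by rewrite !mxE eqxx; case: (j == 0).
by move=> l lj; rewrite !mxE eq_sym (negbTE lj) mul0r.
Qed.

Lemma Efam_diag_mult t g : diag_mult (Ediag t) g (Efam q t g).
Proof.
move=> k j; have chi_y : chi +oo%E k = 1 by rewrite /chi leey.
rewrite /Efam /Ediag /dsub /dadd /Iop /P1 /P2.
case: ifP => _; [|case: ifP => _]; rewrite !mxE ?chi_y; case: (j == 0);
  rewrite ?rmorphB ?rmorphD ?rmorphN ?mul0r ?subrr ?addr0 ?add0r ?mulrBl ?mulrDl ?mulNr ?mul1r //.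
Qed.

Definition form_comp f g j k : R[i] := f k j ord0 * (Sdiag j k)%:C * conjc (g k j ord0).

Lemma form_diag f phi k : form q f phi k = \sum_(j < 2) form_comp f phi j k.
Proof.
rewrite /form !mxE; apply: eq_bigr => j _.
rewrite !mxE (bigD1 j) //= big1 ?addr0 => [|l lj]; last by rewrite !mxE (negbTE lj) mulr0.
by rewrite !mxE eqxx /form_comp /Sdiag; case: (j == 0).
Qed.

Lemma form_diag_mult w f g phi k : diag_mult w g phi ->
  form q f phi k = \sum_(j < 2) (w j k)%:C * form_comp f g j k.
Proof.
move=> wgphi; rewrite form_diag; apply: eq_bigr => j _.
by rewrite /form_comp wgphi conjc_realM; ring.
Qed.


Lemma expR_Nnorm_gt0 k : 0 < expR (- (`|k| * q)).
Proof. exact: expR_gt0. Qed.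

Lemma expR_Nnorm_le1 k : expR (- (`|k| * q)) <= 1.
Proof. by rewrite expR_le1 oppr_le0 mulr_ge0 // ltW. Qed.

Lemma Sdiag_ge0 j k : 0 <= Sdiag j k.
Proof.
have := expR_Nnorm_le1 k; have := expR_Nnorm_gt0 k.
have : 0 <= 1 / (2 * `|k|) by rewrite divr_ge0 // mulr_ge0.
by rewrite /Sdiag; case: (j == 0) => *; apply: mulr_ge0 => //; lra.
Qed.

Lemma Kdiag_bound j k : `|Kdiag j k| <= 1.
Proof.
have := expR_Nnorm_le1 k; have := expR_Nnorm_gt0 k.
by rewrite /Kdiag; case: (j == 0) => *; rewrite ?normrN ger0_norm; lra.
Qed.

Lemma Ediag_bound t j k : `|Ediag t j k| <= 2.
Proof.
rewrite /Ediag /chi; case: (t < 0); [|case: (0 < t)]; case: (j == 0);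
  repeat case: ifP => _; rewrite ler_norml; lra.
Qed.

Lemma measurable_expR_Nnorm : measurable_fun [set: R] (fun k => expR (- (`|k| * q))).
Proof.
by apply: measurableT_comp => //; apply: measurable_funN; exact: measurable_funM.
Qed.

Lemma measurable_Sdiag j : measurable_fun [set: R] (Sdiag j).
Proof.
have minv : measurable_fun [set: R] (fun k : R => 1 / (2 * `|k|)).
  apply: measurable_funM => //; apply: measurableT_comp; first exact: measurable_inv.
  exact: measurable_funM.
rewrite /Sdiag; case: (j == 0); apply: measurable_funM => //.
- by apply: measurable_funB => //; exact: measurable_expR_Nnorm.
- by apply: measurable_funD => //; exact: measurable_expR_Nnorm.
Qed.

Lemma measurable_Kdiag j : measurable_fun [set: R] (Kdiag j).
Proof.
rewrite /Kdiag; case: (j == 0); last apply: measurable_funN;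
  by apply: measurable_funM => //; exact: measurable_expR_Nnorm.
Qed.

Lemma measurable_chi (s : \bar R) : measurable_fun [set: R] (chi s).
Proof.
by apply: measurable_fun_ifT => //; apply: measurable_fun_lee.
Qed.

Lemma measurable_Ediag t j : measurable_fun [set: R] (Ediag t j).
Proof.
rewrite /Ediag; case: (t < 0); [|case: (0 < t)]; case: (j == 0);
  repeat (first [exact: measurable_chi | exact: measurable_cst
                | apply: measurable_funD | apply: measurable_funB | apply: measurable_funN]).
Qed.


Lemma chi_fin v k : chi v%:E k = (k <= v)%R%:R.
Proof. by rewrite /chi lee_fin; case: (k <= v). Qed.

Lemma le_ln_divq y k : 0 < y -> (k <= ln y / q) = (expR (k * q) <= y).
Proof. by move=> y0; rewrite ler_pdivlMr // -[_ <= ln y]ler_expR lnK // posrE. Qed.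

Lemma le_Nln_divq y k : 0 < y -> (k <= - ln y / q) = (y <= expR (- (k * q))).
Proof. by move=> y0; rewrite ler_pdivlMr // lerNr -[ln y <= _]ler_expR lnK // posrE. Qed.

Lemma Ediag_lower j k : Ediag (- (1 / 2)) j k = 0.
Proof.
rewrite /Ediag ifT; last lra.
by case: (j == 0); rewrite // (_ : - (2 * - (1 / 2)) = 1) ?ln1 ?oppr0 ?mul0r ?subrr //; lra.
Qed.

Lemma Ediag_upper j k : Ediag (1 / 2) j k = 1.
Proof.
have half_gt0 : 0 < 1 / 2 :> R by lra.
rewrite /Ediag (lt_gtF half_gt0) half_gt0.
by case: (j == 0); rewrite // (_ : 2 * (1 / 2) = 1) ?ln1 ?oppr0 ?mul0r ?subrr ?add0r //; lra.
Qed.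


Lemma expR_Nnorm_cases k :
  (0 < k /\ expR (- (`|k| * q)) = expR (- (k * q)) /\ expR (- (k * q)) < 1 < expR (k * q)) \/
  (k <= 0 /\ expR (- (`|k| * q)) = expR (k * q) /\ expR (k * q) <= 1 <= expR (- (k * q))).
Proof.
have [k_gt0|k_le0] := ltrP 0 k; [left|right]; split => //.
  by rewrite gtr0_norm // expR_lt1 expR_gt1 oppr_lt0 mulr_gt0.
rewrite ler0_norm // mulNr opprK; split => //.
by rewrite expR_le1 -expR0 ler_expR oppr_ge0 !mulr_le0_ge0 // ltW.
Qed.

Lemma Ediag_step t j k : - (1 / 2) <= t <= 1 / 2 ->
  Ediag t j k = (Kdiag j k < t)%R%:R \/ Ediag t j k = (Kdiag j k <= t)%R%:R.
Proof.
(* The step of the first component is strict iff k > 0, that of the second iff k <= 0. *)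
move=> /andP[tlo thi]; rewrite /Ediag /Kdiag.
move: (expR_gt0 (k * q)) (expR_gt0 (- (k * q))) (expR_Nnorm_cases k).
set A := expR (k * q); set B := expR (- (k * q)) => A0 B0.
case=> [[_ [-> /andP[B1 A1]]] | [_ [-> /andP[A1 B1]]]]; case: (j == 0).
- left; case: (ltrP (1 / 2 * B) t) => K_t /=; case: (ltrP t 0) => t0; case: (ltrP 0 t) => t0';
    rewrite ?chi_fin ?le_ln_divq ?le_Nln_divq; try lra;
    by case: (lerP A (2 * t)); case: (lerP (2 * t) B) => /=; lra.
- right; case: (lerP (- (1 / 2 * B)) t) => K_t /=; case: (ltrP t 0) => t0; case: (ltrP 0 t) => t0';
    rewrite ?chi_fin ?le_ln_divq ?le_Nln_divq; try lra;
    by case: (lerP A (- (2 * t))); case: (lerP (- (2 * t)) B) => /=; lra.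
- right; case: (lerP (1 / 2 * A) t) => K_t /=; case: (ltrP t 0) => t0; case: (ltrP 0 t) => t0';
    rewrite ?chi_fin ?le_ln_divq ?le_Nln_divq; try lra;
    by case: (lerP A (2 * t)); case: (lerP (2 * t) B) => /=; lra.
- left; case: (ltrP (- (1 / 2 * A)) t) => K_t /=; case: (ltrP t 0) => t0; case: (ltrP 0 t) => t0';
    rewrite ?chi_fin ?le_ln_divq ?le_Nln_divq; try lra;
    by case: (lerP A (- (2 * t))); case: (lerP (- (2 * t)) B) => /=; lra.
Qed.


Lemma RSsum_Ediag d n x xi j k : fine_tagged d n x xi -> x 0%N = - (1 / 2) -> x n = 1 / 2 ->
  `|RSsum x xi n (fun t => Ediag t j k) - Kdiag j k| <= d.
Proof.
move=> hx x0 xn; apply: RSsum_step hx x0 xn _ _ _ => //.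
- exact: Ediag_lower.
- exact: Ediag_upper.
- by move=> t; exact: Ediag_step.
Qed.

Lemma Re_form_self f k :
  complex.Re (form q f f k) = \sum_(j < 2) Sdiag j k * Normc.normc (f k j ord0) ^+ 2.
Proof.
rewrite form_diag (linear_sum (@complex.Re R : Rcomplex R -> R)); apply: eq_bigr => j _.
rewrite sqr_normc /form_comp; case: (f k j ord0) => a b /=; ring.
Qed.

Lemma normc_form_comp_le f g j k :
  2 * Normc.normc (form_comp f g j k)
  <= Sdiag j k * (Normc.normc (f k j ord0) ^+ 2 + Normc.normc (g k j ord0) ^+ 2).
Proof.
have S0 := Sdiag_ge0 j k.
rewrite /form_comp !Normc.normcM normc_conj /= expr0n addr0 sqrtr_sqr ger0_norm //.
set a := Normc.normc _; set b := Normc.normc _.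
have := sqr_ge0 (a - b); nra.
Qed.

Lemma form_comp_sum_le f g k :
  2 * \sum_(j < 2) Normc.normc (form_comp f g j k)
  <= complex.Re (form q f f k) + complex.Re (form q g g k).
Proof.
rewrite !Re_form_self -big_split mulr_sumr /=; apply: ler_sum => j _.
by rewrite -mulrDr normc_form_comp_le.
Qed.


Lemma form_comp_le f g j k :
  2 * Normc.normc (form_comp f g j k) <= complex.Re (form q f f k) + complex.Re (form q g g k).
Proof.
apply: le_trans (form_comp_sum_le f g k); rewrite ler_pM2l // (bigD1 j) //= lerDl.
by apply: sumr_ge0 => i _; exact: normc_ge0.
Qed.

Lemma Re_form_self_ge0 f k : 0 <= complex.Re (form q f f k).
Proof.
rewrite Re_form_self; apply: sumr_ge0 => j _.
by rewrite mulr_ge0 ?Sdiag_ge0 ?sqr_ge0.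
Qed.

Lemma cmeasurable_form_comp f g j :
  cmeasurable (fun k => f k j ord0) -> cmeasurable (fun k => g k j ord0) ->
  cmeasurable (form_comp f g j).
Proof.
move=> mf mg; apply: cmeasurableM (cmeasurable_conj mg).
exact: cmeasurableM mf (cmeasurable_real (measurable_Sdiag j)).
Qed.

Lemma integrable_Re_form_self f : inK0 q f -> integrable (fun k => complex.Re (form q f f k)).
Proof.
move=> [mf fin]; apply/integrableP; split.
  apply/measurable_EFinP; under eq_fun do rewrite form_diag.
  by apply: (cmeasurable_sum _ (fun j => cmeasurable_form_comp (mf j) (mf j))).1.
apply: le_lt_trans fin; rewrite le_eqVlt; apply/orP; left; apply/eqP.
by apply: eq_integral => k _ /=; rewrite ger0_norm // Re_form_self_ge0.
Qed.


Lemma integrable_form_comp (p : {scalar Rcomplex R}) f g j :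
  (forall z, `|p z| <= Normc.normc z) -> inK0 q f -> inK0 q g ->
  integrable (fun k => p (form_comp f g j k)).
Proof.
move=> p_le hf hg.
have iP := integrableD measurableT (integrable_Re_form_self hf) (integrable_Re_form_self hg).
apply: le_integrable iP => //.
  apply/measurable_EFinP/linear_measurable; exact: cmeasurable_form_comp (hf.1 j) (hg.1 j).
move=> k _; rewrite /= lee_fin (ger0_norm (addr_ge0 (Re_form_self_ge0 f k) (Re_form_self_ge0 g k))).
apply: le_trans (p_le _) _; apply: le_trans (form_comp_le f g j k).
by rewrite ler_peMl ?normc_ge0 // ler1n.
Qed.

Lemma linear_form_diag_mult (p : {scalar Rcomplex R}) w f g phi k : diag_mult w g phi ->
  p (form q f phi k) = \sum_(j < 2) w j k * p (form_comp f g j k).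
Proof.
move=> wgphi; rewrite (form_diag_mult _ _ wgphi) linear_sum.
by apply: eq_bigr => j _; exact: linear_real_complexM.
Qed.

Section BoundedMultipliers.
Variables (w : 'I_2 -> R -> R) (M : R).
Hypotheses (w_measurable : forall j, measurable_fun [set: R] (w j))
           (w_bounded : forall j k, `|w j k| <= M).

Lemma integrable_linear_form (p : {scalar Rcomplex R}) f g phi :
  (forall z, `|p z| <= Normc.normc z) -> inK0 q f -> inK0 q g -> diag_mult w g phi ->
  integrable (fun k => p (form q f phi k)).
Proof.
move=> p_le hf hg wgphi.
rewrite (_ : (fun k => _) = fun k => \sum_(j < 2) w j k * p (form_comp f g j k)).
  apply: integrable_sumr => j; have iH := integrable_form_comp j p_le hf hg.
  exact: (@integrable_bounded_mulr _ _ _ mu _ _ _ (w_measurable j) (w_bounded j) iH).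
by apply/funext => k; exact: linear_form_diag_mult.
Qed.

Lemma linear_ip (p : {scalar Rcomplex R}) f g phi :
  inK0 q f -> inK0 q g -> diag_mult w g phi ->
  p (ip q f phi) = \int[mu]_k p (form q f phi k).
Proof.
move=> hf hg wgphi; apply: linear_cint.
- exact: integrable_linear_form (@normr_Re_le_normc _) hf hg wgphi.
- exact: integrable_linear_form (@normr_Im_le_normc _) hf hg wgphi.
Qed.

End BoundedMultipliers.


Lemma linear_ip_Efam_RSsum_le (p : {scalar Rcomplex R}) f g d n x xi :
  (forall z, `|p z| <= Normc.normc z) -> inK0 q f -> inK0 q g ->
  fine_tagged d n x xi -> x 0%N = - (1 / 2) -> x n = 1 / 2 ->
  `|p (\sum_(i < n) (xi i)%:C * (ip q f (Efam q (x i.+1) g) - ip q f (Efam q (x i) g))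
       - ip q f (Kop q g))|
  <= d / 2 * (complex.Re (ip q f f) + complex.Re (ip q g g)).
Proof.
move=> p_le hf hg hx x0 xn; rewrite (linear_RSsum p (fun t => ip q f (Efam q t g))).
have d_ge0 : 0 <= d := le_trans (normr_ge0 _) (RSsum_Ediag 0 0 hx x0 xn).
have iPf := integrable_Re_form_self hf; have iPg := integrable_Re_form_self hg.
have -> : complex.Re (ip q f f) + complex.Re (ip q g g)
          = \int[mu]_k (complex.Re (form q f f k) + complex.Re (form q g g k)).
  by rewrite RintegralD.
have -> : (fun t => p (ip q f (Efam q t g))) = fun t => \int[mu]_k p (form q f (Efam q t g) k).
  apply/funext => t.
  exact (linear_ip (measurable_Ediag t) (Ediag_bound t) p hf hg (Efam_diag_mult t g)).
rewrite (linear_ip measurable_Kdiag Kdiag_bound p hf hg (Kop_diag_mult g)) -RintegralZl //;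
  last exact (integrableD measurableT iPf iPg).
apply: RSsum_Rintegral_le.
- move=> t; have wE := Efam_diag_mult t g.
  exact (integrable_linear_form (measurable_Ediag t) (Ediag_bound t) p_le hf hg wE).
- exact (integrable_linear_form measurable_Kdiag Kdiag_bound p_le hf hg (Kop_diag_mult g)).
- exact: (integrableZl measurableT _ (integrableD measurableT iPf iPg)).
move=> k /=; rewrite (linear_form_diag_mult _ _ _ (Kop_diag_mult g)).
have -> : (fun t => p (form q f (Efam q t g) k))
          = fun t => \sum_(j < 2) Ediag t j k * p (form_comp f g j k).
  by apply/funext => t; exact: linear_form_diag_mult (Efam_diag_mult t g).
rewrite RSsum_sum -sumrB; under eq_bigr do rewrite RSsumMr -mulrBl.
have term_le j : `|(RSsum x xi n (fun t => Ediag t j k) - Kdiag j k) * p (form_comp f g j k)|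
                  <= d * Normc.normc (form_comp f g j k).
  by rewrite normrM ler_pM ?RSsum_Ediag ?p_le.
apply: le_trans (ler_norm_sum _ _ _) (le_trans (ler_sum _ (fun j _ => term_le j)) _).
rewrite -mulr_sumr; have := form_comp_sum_le f g k; nra.
Qed.

End TouchingDisks.

Theorem theorem4p4 (R : realType) (Rad r : R) :
  0 < Rad -> 0 < r ->
  forall f g : dens R,
    inK0 (q1 r Rad) f -> inK0 (q1 r Rad) g ->
    is_RS_integral (fun t : R => t)
      (fun t : R => ip (q1 r Rad) f (Efam (q1 r Rad) t g))
      (- (1 / 2)) (1 / 2)
      (ip (q1 r Rad) f (Kop (q1 r Rad) g)).
Proof.
move=> Rad_gt0 r_gt0 f g; set q := q1 r Rad => hf hg eps eps_gt0.
have q_gt0 : 0 < q by rewrite /q /q1 addr_gt0 // divr_gt0 // mulr_gt0.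
set N := complex.Re (ip q f f) + complex.Re (ip q g g).
have N_ge0 : 0 <= N.
  by rewrite addr_ge0 // Rintegral_ge0 // => k _; exact: Re_form_self_ge0.
exists (eps / (N + 1)) => [|n x xi x0 xn hx]; first by rewrite divr_gt0 // ltr_wpDl.
have key p p_le := @linear_ip_Efam_RSsum_le _ q q_gt0 p f g _ _ _ _ p_le hf hg hx x0 xn.
apply: le_lt_trans (normc_le_Re_Im _) _.
apply: le_lt_trans (lerD (key _ (@normr_Re_le_normc _)) (key _ (@normr_Im_le_normc _))) _.
rewrite -/N -mulrDl -splitr mulrAC ltr_pdivrMr ?ltr_pM2l //; lra.
Qed.
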